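(* Let $k$ be a positive integer and let $G=(V,E)$ be a finite, simple, connected graph on $n=n(G)$ vertices with minimum degree $\delta$ and maximum degree $\Delta\ge k+1$. (i) If $\delta<\Delta=k+1$, then $F_k(G)=1$. (ii) If $\delta=\Delta=k+1$, then $F_k(G)=2$. (iii) If $\Delta\ge k+2$, then \[ F_k(G)\le \frac{(\Delta-k-1)\,n+\max\{\delta(k+1-\Delta)+k,\ k(\delta-\Delta+2)\}}{\Delta-1}. \]
   Context: All graphs are finite, simple and undirected. For a positive integer $k$, a set $S\subseteq V$ is a $k$-forcing set of $G$ if the following process colors every vertex of $G$: initially the vertices of $S$ are colored and all others are uncolored; repeatedly, whenever a colored vertex has at most $k$ uncolored neighbors, all of its uncolored neighbors become colored. The $k$-forcing number $F_k(G)$ is the minimum cardinality of a $k$-forcing set of $G$. *)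

From HB Require Import structures.
From mathcomp Require Import all_boot all_order all_algebra.
Set Implicit Arguments. Unset Strict Implicit. Unset Printing Implicit Defensive.

Section Graph.
Variables (T : finType) (e : rel T).

Definition simple_graph := symmetric e /\ irreflexive e.
Definition connected_graph := forall x y : T, connect e x y.

Definition nbhd (v : T) : {set T} := [set w | e v w].
Definition deg (v : T) : nat := #|nbhd v|.

Definition kforce_step (k : nat) (C : {set T}) : {set T} :=
  C :|: \bigcup_(v in C | #|nbhd v :\: C| <= k) nbhd v.

(* the set colored at the end of the process (the process stabilises
   after at most #|T| rounds) *)
Definition kforce_closure (k : nat) (S : {set T}) : {set T} :=
  iter #|T| (kforce_step k) S.

Definition kforcing_set (k : nat) (S : {set T}) : bool :=
  kforce_closure k S == [set: T].

(* F_k(G): minimum cardinality of a k-forcing set ([set: T] is always one) *)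
Definition kforcing_number (k : nat) : nat :=
  #|[arg min_(S < [set: T] | kforcing_set k S) #|S|]|.
End Graph.

From HB Require Import structures.
From mathcomp Require Import all_boot all_order all_algebra.
From mathcomp Require Import zify lra.
Import Order.TTheory GRing.Theory Num.Theory.
Set Implicit Arguments. Unset Strict Implicit. Unset Printing Implicit Defensive.

(* Let C be a colored set closed under the forcing rule in which every vertex has
   a colored neighbour. A colored vertex u with a set U of uncolored neighbours has
   k < #|U| <= Delta - 1; coloring #|U| - k vertices of U lets u force the rest, so
   each newly colored vertex costs at most (Delta - k - 1) / (Delta - 1) seed
   vertices. Seeding with a vertex v of minimum degree and deg v - k of its
   neighbours colors N[v], and this greedy completion gives (iii). For
   Delta = k + 1 the completion is free, giving the upper bounds in (i) and (ii);
   the lower bound in (ii) holds because a single vertex of degree k + 1 forces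
   nothing. *)

Lemma exists_subset_card (T : finType) (U : {set T}) m :
  m <= #|U| -> exists2 A : {set T}, A \subset U & #|A| = m.
Proof.
move=> mU; exists [set x in take m (enum U)].
  by apply/subsetP => x; rewrite inE => /mem_take; rewrite mem_enum.
by rewrite cardsE (card_uniqP _) ?take_uniq ?enum_uniq // size_takel // -cardE.
Qed.

Lemma connect_boundary_edge (T : finType) (e : rel T) (C : {set T}) x y :
  connect e x y -> x \in C -> y \notin C ->
  exists u w, [/\ u \in C, w \notin C & e u w].
Proof.
move=> /connectP[p xp ->]; elim: p x xp => [|z p IH] x /=; first by move=> _ ->.
case/andP=> exz zp xC; have [zC | zC] := boolP (z \in C); first exact: IH.
by exists x, z.
Qed.

Section KForcing.
Variables (T : finType) (e : rel T) (k : nat).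
Local Notation step := (kforce_step e k).
Local Notation closure := (kforce_closure e k).

Lemma kforce_step_ext (C : {set T}) : C \subset step C.
Proof. exact: subsetUl. Qed.

Lemma kforce_step_mono : {homo step : C D / C \subset D}.
Proof.
move=> C D CD; apply/subsetP => x; rewrite !inE.
case/orP=> [xC | /bigcupP[v /andP[vC hv] xv]]; first by rewrite (subsetP CD).
apply/orP; right; apply/bigcupP; exists v => //.
by rewrite (subsetP CD) //= (leq_trans _ hv) // subset_leq_card // setDS.
Qed.

Lemma kforce_step0 : step set0 = set0.
Proof.
rewrite /kforce_step set0U; apply/eqP; rewrite -subset0.
by apply/bigcupsP => v; rewrite inE.
Qed.

Lemma kforce_iter_ext i (S : {set T}) : S \subset iter i step S.
Proof. elim: i => //= i IH; exact: subset_trans IH (kforce_step_ext _). Qed.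

Lemma kforce_iter_min i (S C : {set T}) :
  S \subset C -> step C = C -> iter i step S \subset C.
Proof.
move=> SC fixC; elim: i => //= i IH; rewrite -fixC; exact: kforce_step_mono.
Qed.

(* [closure S] is one iteration ahead of [fixset (fun X => S :|: step X)]. *)
Lemma kforce_closureK (S : {set T}) : S :|: step (closure S) = closure S.
Proof.
pose F X := S :|: step X.
have F_mono : {homo F : X Y / X \subset Y}.
  by move=> X Y XY; apply/setUS/kforce_step_mono.
have iterF i : iter i.+1 F set0 = iter i step S.
  elim: i => [|i IH]; first by rewrite /= /F kforce_step0 setU0.
  by rewrite iterS IH /F (setUidPr (kforce_iter_ext i.+1 S)).
rewrite /kforce_closure -iterF -/(F _) iterS.
by rewrite -[iter #|T| F set0]/(fixset F) !(fixsetK F_mono).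
Qed.

Lemma kforce_closure_ext (S : {set T}) : S \subset closure S.
Proof. by rewrite -kforce_closureK subsetUl. Qed.

Lemma kforce_closure_fixed (S : {set T}) : step (closure S) = closure S.
Proof.
apply/eqP; rewrite eqEsubset kforce_step_ext andbT.
by rewrite -{2}kforce_closureK subsetUr.
Qed.

Lemma kforce_closure_min (S C : {set T}) :
  S \subset C -> step C = C -> closure S \subset C.
Proof. exact: kforce_iter_min. Qed.

Lemma kforce_closure_mono : {homo closure : S S' / S \subset S'}.
Proof.
move=> S S' SS'; apply: kforce_closure_min (kforce_closure_fixed S').
exact: subset_trans SS' (kforce_closure_ext S').
Qed.

Lemma kforce_closureUl (X Y : {set T}) : closure (closure X :|: Y) = closure (X :|: Y).
Proof.
apply/eqP; rewrite eqEsubset; apply/andP; split; last first.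
  exact/kforce_closure_mono/setSU/kforce_closure_ext.
apply: kforce_closure_min (kforce_closure_fixed _).
rewrite subUset kforce_closure_mono ?subsetUl //=.
exact: subset_trans (subsetUr X Y) (kforce_closure_ext _).
Qed.

Lemma kforce_closure_nbr (S : {set T}) x :
  x \in closure S -> x \in S \/ exists2 y, y \in closure S & e y x.
Proof.
rewrite {1}/kforce_closure; elim: #|T| => /= [|i IH]; first by left.
rewrite inE => /orP[/IH // | /bigcupP[v /andP[vi _]]]; rewrite inE => evx.
right; exists v => //.
exact: subsetP (kforce_iter_min i (kforce_closure_ext S) (kforce_closure_fixed S)) v vi.
Qed.

Lemma kforce_fixed_nbhd (C : {set T}) u :
  step C = C -> u \in C -> #|nbhd e u :\: C| <= k -> nbhd e u \subset C.
Proof.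
move=> fixC uC hu; rewrite -fixC; apply: subset_trans (subsetUr C _).
by apply: (bigcup_sup u); rewrite uC.
Qed.

Lemma kforce_closure1 x :
  irreflexive e -> k < deg e x -> closure [set x] = [set x].
Proof.
move=> irr hx; apply/eqP; rewrite eqEsubset kforce_closure_ext andbT.
apply: kforce_closure_min => //; apply/eqP.
rewrite eqEsubset kforce_step_ext andbT /kforce_step subUset subxx /=.
apply/bigcupsP => v; rewrite inE => /andP[/eqP-> ].
have -> : nbhd e x :\: [set x] = nbhd e x.
  by apply/setDidPl; rewrite disjoint_sym disjoints1 inE irr.
by rewrite leqNgt hx.
Qed.

Lemma kforcing_number_le (S : {set T}) :
  kforcing_set e k S -> kforcing_number e k <= #|S|.
Proof.
rewrite /kforcing_number; case: arg_minnP => [|S0 _ minS0 /minS0 //].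
by rewrite /kforcing_set -subTset kforce_closure_ext.
Qed.

Lemma kforcing_number_witness :
  exists2 S, kforcing_set e k S & #|S| = kforcing_number e k.
Proof.
rewrite /kforcing_number; case: arg_minnP => [|S0 fS0 _]; last by exists S0.
by rewrite /kforcing_set -subTset kforce_closure_ext.
Qed.

Lemma kforcing_number_gt0 (x : T) : 0 < kforcing_number e k.
Proof.
have [S fS <-] := kforcing_number_witness; rewrite card_gt0.
apply: contraTneq fS => ->; rewrite /kforcing_set eqEsubset subsetT /=.
have -> : closure set0 = set0.
  by apply/eqP; rewrite -subset0 kforce_closure_min ?kforce_step0.
by apply/subsetPn; exists x; rewrite ?inE.
Qed.

Lemma kforcing_number_gt1 (x y : T) : irreflexive e -> x != y ->
  (forall v, k < deg e v) -> 1 < kforcing_number e k.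
Proof.
move=> irr xy degk; have [S fS FS] := kforcing_number_witness.
rewrite ltn_neqAle eq_sym kforcing_number_gt0 // andbT -FS.
apply: contra xy => /cards1P[z Sz]; move: fS.
rewrite /kforcing_set Sz kforce_closure1 // => /eqP zT.
by have := in_setT x; have := in_setT y; rewrite -zT !inE => /eqP-> /eqP->.
Qed.

End KForcing.

Section Greedy.
Variables (T : finType) (e : rel T) (k Delta : nat).
Hypotheses (e_sym : symmetric e) (e_irr : irreflexive e).
Hypothesis e_conn : connected_graph e.
Hypothesis deg_le : forall v, deg e v <= Delta.
Local Notation step := (kforce_step e k).
Local Notation closure := (kforce_closure e k).

Definition no_isolated (C : {set T}) := forall x, x \in C -> exists2 y, y \in C & e x y.

Lemma nbhd_neq0 x y : x != y -> nbhd e x != set0.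
Proof.
move=> xy; have [|u [w [/set1P-> _ xw]]] := connect_boundary_edge (e_conn x y) (set11 x).
  by rewrite inE eq_sym.
by apply/set0Pn; exists w; rewrite inE.
Qed.

Lemma card_closed_nbhd v : #|v |: nbhd e v| = (deg e v).+1.
Proof. by rewrite cardsU1 inE e_irr. Qed.

Lemma no_isolated_closure (S : {set T}) :
  (forall x, x \in S -> exists2 y, y \in closure S & e x y) -> no_isolated (closure S).
Proof.
move=> hS x /kforce_closure_nbr[/hS // | [y yS eyx]].
by exists y; rewrite // e_sym.
Qed.

Lemma kforce_extend_step (C : {set T}) u w : step C = C -> no_isolated C ->
  u \in C -> w \notin C -> e u w ->
  exists A : {set T}, [/\ #|~: closure (C :|: A)| < #|~: C|,
    no_isolated (closure (C :|: A)) &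
    Delta.-1 * #|A| + (Delta - k.+1) * #|~: closure (C :|: A)|
      <= (Delta - k.+1) * #|~: C|].
Proof.
move=> fixC isoC uC wC euw; set U := nbhd e u :\: C.
have kU : k < #|U|.
  rewrite ltnNge; apply: contraNN wC => /(kforce_fixed_nbhd fixC uC) /subsetP.
  by apply; rewrite inE.
have UD : #|U| <= Delta.-1.
  have [y yC euy] := isoC u uC.
  rewrite -ltnS (leq_trans _ (leqSpred _)) // (leq_trans _ (deg_le u)) //.
  by apply/proper_card/properP; split; [exact: subsetDl | exists y; rewrite !inE ?yC].
have [A AU cardA] := exists_subset_card (leq_subr k #|U|).
set C' := closure (C :|: A).
have CC' : C \subset C' := subset_trans (subsetUl C A) (kforce_closure_ext e k _).
have AC' : A \subset C' := subset_trans (subsetUr C A) (kforce_closure_ext e k _).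
have nbC' : nbhd e u \subset C'.
  apply: kforce_fixed_nbhd (kforce_closure_fixed e k _) (subsetP CC' u uC) _.
  apply: leq_trans (_ : #|U :\: A| <= k); last by rewrite cardsD (setIidPr AU) cardA; lia.
  apply/subset_leq_card/subsetP => z; rewrite /U !inE => /andP[zC' ->].
  by rewrite (contra (subsetP AC' z)) ?(contra (subsetP CC' z)).
have cardC' : #|~: C'| + #|U| <= #|~: C|.
  have disjC'U : ~: C' :&: U = set0.
    apply/setP => z; rewrite /U !inE; apply/negP => /and3P[zC' _ euz].
    by rewrite (subsetP nbC') ?inE in zC'.
  rewrite -cardsUI disjC'U cards0 addn0 subset_leq_card // subUset setCS CC' /=.
  by apply/subsetP => z; rewrite /U !inE => /andP[].
exists A; split.
- by rewrite -/C'; lia.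
- apply: no_isolated_closure => x; rewrite inE => /orP[xC | xA].
    by have [y yC exy] := isoC x xC; exists y; rewrite ?(subsetP CC').
  exists u; first exact: subsetP CC' u uC.
  by have := subsetP AU x xA; rewrite /U !inE e_sym => /andP[].
- rewrite -/C' cardA.
  have costA : Delta.-1 * (#|U| - k) <= (Delta - k.+1) * #|U| by nia.
  have := leq_mul (leqnn (Delta - k.+1)) cardC'; nia.
Qed.

Lemma kforcing_completion (C : {set T}) : step C = C -> no_isolated C -> C != set0 ->
  exists2 A : {set T}, kforcing_set e k (C :|: A) &
    Delta.-1 * #|A| <= (Delta - k.+1) * #|~: C|.
Proof.
elim: {C}_.+1 {-2}C (ltnSn #|~: C|) => // m IH C Cm fixC isoC C0.
have [CT | CnT] := eqVneq C [set: T].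
  exists set0; last by rewrite cards0 muln0.
  by rewrite /kforcing_set CT setU0 -subTset kforce_closure_ext.
have /subsetPn[y _ yC] : ~~ ([set: T] \subset C) by rewrite subTset.
have [x xC] := set0Pn _ C0.
have [u [w [uC wC euw]]] := connect_boundary_edge (e_conn x y) xC yC.
have [A0 [ltC' isoC' costA0]] := kforce_extend_step fixC isoC uC wC euw.
set C' := closure (C :|: A0) in ltC' isoC' costA0.
have C'0 : C' != set0.
  by apply/set0Pn; exists x; apply: (subsetP (kforce_closure_ext e k _)); rewrite inE xC.
have [|A1 forceA1 costA1] := IH C' _ (kforce_closure_fixed e k _) isoC' C'0.
  exact: leq_trans ltC' Cm.
exists (A0 :|: A1); first by rewrite /kforcing_set setUA -kforce_closureUl.
have := leq_mul (leqnn Delta.-1) (leq_card_setU A0 A1).1; nia.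
Qed.

Lemma kforcing_seed_extend v (A0 : {set T}) : A0 \subset nbhd e v ->
  #|nbhd e v :\: A0| <= k -> nbhd e v != set0 ->
  exists2 A : {set T}, kforcing_set e k (v |: A0 :|: A) &
    Delta.-1 * #|A| <= (Delta - k.+1) * (#|T| - (deg e v).+1).
Proof.
move=> A0v cardA0 v0; set C0 := closure (v |: A0).
have vC0 : v \in C0 by rewrite (subsetP (kforce_closure_ext e k _)) ?setU11.
have nbC0 : nbhd e v \subset C0.
  apply: kforce_fixed_nbhd (kforce_closure_fixed e k _) vC0 (leq_trans _ cardA0).
  rewrite subset_leq_card // setDS //.
  by rewrite (subset_trans (subsetUr [set v] A0)) ?kforce_closure_ext.
have isoC0 : no_isolated C0.
  apply: no_isolated_closure => x; rewrite !inE => /orP[/eqP-> | xA0].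
    have [y yv] := set0Pn _ v0; exists y; first exact: subsetP nbC0 y yv.
    by move: yv; rewrite inE.
  by exists v => //; have := subsetP A0v x xA0; rewrite inE e_sym.
have [|A forceA costA] := kforcing_completion (kforce_closure_fixed e k _) isoC0.
  by apply/set0Pn; exists v.
exists A; first by rewrite /kforcing_set -kforce_closureUl.
apply: leq_trans costA _; rewrite leq_mul2l cardsCs setCK leq_sub2l ?orbT //.
by rewrite -card_closed_nbhd subset_leq_card // subUset sub1set vC0.
Qed.

Lemma kforcing_number_seed_maxdeg v (A0 : {set T}) : 0 < k -> Delta = k.+1 ->
  A0 \subset nbhd e v -> #|nbhd e v :\: A0| <= k -> nbhd e v != set0 ->
  kforcing_number e k <= #|v |: A0|.
Proof.
move=> k0 Dk A0v cardA0 v0; have [A forceA] := kforcing_seed_extend A0v cardA0 v0.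
rewrite Dk subnn mul0n leqn0 muln_eq0 cards_eq0 /= (gtn_eqF k0) => /eqP A_eq0.
by apply: kforcing_number_le; rewrite A_eq0 setU0 in forceA.
Qed.

End Greedy.

Section Arithmetic.
Local Open Scope ring_scope.

Lemma forcing_bound_arith (F a n d k D : nat) : (k.+2 <= D)%N -> (d < n)%N ->
  (F <= 1 + (d - k) + a)%N -> (D.-1 * a <= (D - k.+1) * (n - d.+1))%N ->
  (F%:R : rat) <= ((D%:R - k%:R - 1) * n%:R
     + Num.max (d%:R * (k%:R + 1 - D%:R) + k%:R) (k%:R * (d%:R - D%:R + 2)))
    / (D%:R - 1).
Proof.
move=> kD dn hF ha.
have {ha} ha : (D%:R - 1) * a%:R <= (D%:R - k%:R - 1) * (n%:R - d%:R - 1) :> rat.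
  move: ha; rewrite -subn1 -(ler_nat rat) !natrM !natrB -?natr1; lra || lia.
have kD' : k%:R + 2 <= D%:R :> rat by rewrite -[2]/(2%:R) -natrD ler_nat; lia.
have k0 := ler0n rat k.
have D1 : 0 <= D%:R - 1 :> rat by lra.
rewrite ler_pdivlMr; last lra.
have [kd | dk] := leqP k d.
- apply: le_trans (_ : _ <= (D%:R - k%:R - 1) * n%:R + k%:R * (d%:R - D%:R + 2)) _.
    move: hF; rewrite -(ler_nat rat) !natrD natrB // => /(ler_wpM2r D1); lra.
  by rewrite lerD2l le_max lexx orbT.
- apply: le_trans
    (_ : _ <= (D%:R - k%:R - 1) * n%:R + (d%:R * (k%:R + 1 - D%:R) + k%:R)) _.
    have d_k0 : (d - k = 0)%N by lia.
    move: hF; rewrite d_k0 addn0 -(ler_nat rat) !natrD => /(ler_wpM2r D1); lra.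
  by rewrite lerD2l le_max lexx.
Qed.

End Arithmetic.

Theorem theorem1 (T : finType) (e : rel T) (k delta Delta : nat)
  (Hsimple : simple_graph e) (Hconn : connected_graph e)
  (Hk : 0 < k)
  (Hmin : forall v : T, delta <= deg e v) (Hmin' : exists v : T, deg e v = delta)
  (HMax : forall v : T, deg e v <= Delta) (HMax' : exists v : T, deg e v = Delta)
  (HDelta : k.+1 <= Delta) :
  [/\ (delta < Delta -> Delta = k.+1 -> kforcing_number e k = 1),
      (delta = Delta -> Delta = k.+1 -> kforcing_number e k = 2) &
      (k.+2 <= Delta ->
        (((kforcing_number e k)%:R : rat) <=
          ((Delta%:R - k%:R - 1) * #|T|%:R
             + Num.max (delta%:R * (k%:R + 1 - Delta%:R) + k%:R)
                       (k%:R * (delta%:R - Delta%:R + 2)))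
          / (Delta%:R - 1))%R)].
Proof.
have [e_sym e_irr] := Hsimple; have [v0 degv0] := HMax'.
have [w0 v0w0] : exists w0, w0 \in nbhd e v0.
  by apply/set0Pn; rewrite -card_gt0 -/(deg e v0) degv0 (leq_trans _ HDelta).
have neq_v0w0 : v0 != w0 by apply: contraTneq v0w0 => <-; rewrite inE e_irr.
have nbhd0 v : nbhd e v != set0.
  have [-> | vv0] := eqVneq v v0; first exact: (nbhd_neq0 Hconn neq_v0w0).
  exact: (nbhd_neq0 Hconn vv0).
have seed_maxdeg := kforcing_number_seed_maxdeg e_sym e_irr Hconn HMax Hk.
have [v degv] := Hmin'; split.
- move=> dD Dk; apply/eqP; rewrite eqn_leq (kforcing_number_gt0 e k v) andbT.
  rewrite -(cards1 v) -(setU0 [set v]) seed_maxdeg ?sub0set ?setD0 //.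
  by rewrite -/(deg e v) degv -ltnS -Dk.
- move=> dD Dk; apply/eqP; rewrite eqn_leq (kforcing_number_gt1 e_irr neq_v0w0) ?andbT.
    apply: leq_trans (seed_maxdeg v0 [set w0] Dk _ _ (nbhd0 v0)) _;
      rewrite ?sub1set ?cards2 ?neq_v0w0 //.
    by have := cardsD1 w0 (nbhd e v0); rewrite v0w0 -/(deg e v0) degv0 Dk => -[->].
  by move=> x; rewrite -Dk -dD Hmin.
- move=> kD.
  have [A0 A0v cardA0] := exists_subset_card (leq_subr k (deg e v)).
  have cardvA0 : #|nbhd e v :\: A0| <= k.
    by rewrite cardsD (setIidPr A0v) cardA0 -/(deg e v); lia.
  have [A forceA costA] :=
    kforcing_seed_extend e_sym e_irr Hconn HMax A0v cardvA0 (nbhd0 v).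
  apply: (forcing_bound_arith (a := #|A|)); rewrite -?degv //.
  + by rewrite -(card_closed_nbhd e_irr) max_card.
  + apply: leq_trans (kforcing_number_le forceA) _; rewrite -cardA0.
    by rewrite (leq_trans (leq_card_setU _ _).1) // leq_add2r cardsU1 leq_add2r leq_b1.
Qed.
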